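(* Let $\alpha\in\mathbb{R}\setminus\{0\}$ and $n\in\mathbb{N}$. Let $I_n$ and $f$ be as defined in the context. Then $f$ maps $I_n\setminus\{n\}$ into $(-1,1)\cup\{(-1)^n\}$. Moreover, for $x\in I_n\setminus\{n\}$ we have $f(x)=(-1)^n$ if and only if $$\left|\cos x\pi+\frac{\alpha}{4x}\sin x\pi\right|=1,$$ and $$\lim_{x\in I_n,\;x\to n} f(x)=(-1)^{n+1}.$$
   Context: Put $g(x)=\cos x\pi+\frac{\alpha}{4x}\sin x\pi$ for $x>0$. For $n\in\mathbb{N}$, let $I_n$ be the connected component containing $n$ of the set $\{x>0:\ |g(x)|\ge 1\}$; note that $|g(n)|=1$. For $x\in I_n\setminus\{n\}$ define $$f(x)=-\cos x\pi+\frac{\sin^2 x\pi}{\frac{\alpha}{4x}\sin x\pi\pm\sqrt{g(x)^2-1}} ,$$ where the sign $\pm$ is the sign of $g(x)$. *)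

From HB Require Import structures.
From mathcomp Require Import all_boot all_order all_algebra.
From mathcomp Require Import all_classical all_reals all_analysis.
Set Implicit Arguments. Unset Strict Implicit. Unset Printing Implicit Defensive.
Import Order.TTheory GRing.Theory Num.Theory numFieldNormedType.Exports.
Local Open Scope classical_set_scope.
Local Open Scope ring_scope.

Definition gfun {R : realType} (alpha : R) (x : R) : R :=
  cos (x * pi) + alpha / (4 * x) * sin (x * pi).

Definition Iset {R : realType} (alpha : R) (n : nat) : set R :=
  connected_component [set x : R | 0 < x /\ 1 <= `|gfun alpha x|] n%:R.

(* f(x) = -cos(x pi) + sin^2(x pi) / (alpha/(4x) sin(x pi) +- sqrt(g^2-1)),
   where +- is the sign of g(x) (g(x) <> 0 on I_n since |g| >= 1). *)
Definition ffun {R : realType} (alpha : R) (x : R) : R :=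
  - cos (x * pi) + (sin (x * pi)) ^+ 2 /
    (alpha / (4 * x) * sin (x * pi)
     + Num.sg (gfun alpha x) * Num.sqrt (gfun alpha x ^+ 2 - 1)).

From HB Require Import structures.
From mathcomp Require Import all_boot all_order all_algebra.
From mathcomp Require Import all_classical all_reals all_analysis.
From mathcomp Require Import ring lra.
Import Order.TTheory GRing.Theory Num.Theory numFieldNormedType.Exports.
Local Open Scope classical_set_scope.
Local Open Scope ring_scope.

(* On I_n the function g keeps the sign σ = (-1)^n of g(n), because g maps the
   connected set I_n onto an interval that avoids 0.  So I_n contains neither
   n - 1 nor n + 1, hence lies within distance 1 of n, and cos(xπ) <> σ for
   x <> n.  With c = cos(xπ), s = sin(xπ), A = α/(4x) and r = sqrt(g^2 - 1) we
   have f = -c + s^2/(As + σr).  For σ = 1 the denominator D = As + r is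
   positive, and (1 - f)D = (1 + c)(g - 1 + r), (1 + f)D = (1 - c)(D + 1 + c)
   give the range of f and its equality case; σ = -1 is symmetric.  Since As
   and σr have the same sign, |f + σ| <= |c - σ| + |s|/|A|, and the right-hand
   side vanishes at x = n. *)

Section FfunForm.
Context {R : realFieldType}.
Implicit Types c s A g r v : R.

Definition ffun_form c s A r := - c + s ^+ 2 / (A * s + r).

Lemma ffun_form_range_ge1 c s A g r :
  c ^+ 2 + s ^+ 2 = 1 -> g = c + A * s -> 0 <= r -> r ^+ 2 = g ^+ 2 - 1 ->
  1 <= g -> c != 1 ->
  ((-1 < ffun_form c s A r < 1) \/ ffun_form c s A r = 1) /\
  (ffun_form c s A r = 1 <-> g = 1).
Proof.
move=> cs gE r_ge0 rE g_ge1 c_neq1.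
have c_lt1 : c < 1 by rewrite lt_neqAle c_neq1; nra.
have D_gt0 : 0 < A * s + r by nra.
set D := A * s + r in D_gt0; set F := ffun_form c s A r.
have FD : F * D = - c * D + s ^+ 2 by rewrite mulrDl mulfVK ?gt_eqF.
have s2 : s ^+ 2 = 1 - c ^+ 2 by rewrite -cs; ring.
have FD1 : (1 - F) * D = (1 + c) * (g - 1 + r).
  by rewrite mulrBl mul1r FD s2 gE /D; ring.
have FD2 : (1 + F) * D = (1 - c) * (D + 1 + c).
  by rewrite mulrDl mul1r FD s2; ring.
have c_geN1 : -1 <= c by nra.
have F_le1 : F <= 1.
  by rewrite -subr_ge0 -(pmulr_lge0 _ D_gt0) FD1 mulr_ge0 //; lra.
have F_gtN1 : -1 < F.
  by rewrite -subr_gt0 opprK addrC -(pmulr_lgt0 _ D_gt0) FD2 mulr_gt0 //; lra.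
have F_eq1 : F = 1 <-> g = 1.
  split=> [F1|g1].
    have : (1 + c) * (g - 1 + r) = 0 by rewrite -FD1 F1 subrr mul0r.
    move/eqP; rewrite mulf_eq0 => /orP[/eqP c1|/eqP]; last by lra.
    have : s ^+ 2 = 0 by rewrite s2 (_ : c = -1); [ring | lra].
    by move/eqP; rewrite expf_eq0 /= => /eqP s0; move: g_ge1; rewrite gE s0; lra.
  have r0 : r = 0 by nra.
  apply/eqP; rewrite eq_sym -subr_eq0; apply/eqP/(mulIf (lt0r_neq0 D_gt0)).
  by rewrite FD1 g1 r0 mul0r; ring.
split=> //; have [F1|F_neq1] := eqVneq F 1; [by right|left].
by rewrite F_gtN1 lt_neqAle F_neq1 F_le1.
Qed.

Lemma ffun_form_oppr c s A r :
  ffun_form c s A (- r) = - ffun_form (- c) s (- A) r.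
Proof. by rewrite /ffun_form opprD opprK -mulrN -invrN opprD mulNr opprK. Qed.

Lemma ffun_form_range k c s A g r :
  c ^+ 2 + s ^+ 2 = 1 -> g = c + A * s -> 0 <= r -> r ^+ 2 = g ^+ 2 - 1 ->
  1 <= (-1) ^+ k * g -> c != (-1) ^+ k ->
  let F := ffun_form c s A ((-1) ^+ k * r) in
  ((-1 < F < 1) \/ F = (-1) ^+ k) /\ (F = (-1) ^+ k <-> `|g| = 1).
Proof.
rewrite -signr_odd; case: (odd k); rewrite ?expr0 ?expr1 ?mul1r ?mulN1r;
  move=> cs gE r_ge0 rE g_ge1 c_neq F; last first.
  by rewrite /F ger0_norm; [exact: ffun_form_range_ge1 | lra].
have [range F_eq1] : ((-1 < - F < 1) \/ - F = 1) /\ (- F = 1 <-> - g = 1).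
  rewrite /F ffun_form_oppr opprK.
  by apply: ffun_form_range_ge1; rewrite ?sqrrN ?eqr_oppLR // gE mulNr opprD.
rewrite ler0_norm; last by lra.
split; last by rewrite -F_eq1; split=> [->|<-]; rewrite opprK.
case: range => [|<-]; last by rewrite opprK; right.
by rewrite ltrNr ltrNl opprK andbC; left.
Qed.

Lemma norm_sqr_div_le s A v :
  A != 0 -> 0 <= A * s * v -> `|s ^+ 2 / (A * s + v)| <= `|s| / `|A|.
Proof.
move=> A_neq0 Asv_ge0; have [->|s_neq0] := eqVneq s 0.
  by rewrite expr0n /= !mul0r normr0.
have As_gt0 : 0 < `|A * s| by rewrite normr_gt0 mulf_neq0.
have As_le : `|A * s| <= `|A * s + v|.
  by rewrite -ler_sqr ?nnegrE ?normr_ge0 // !real_normK ?num_real //; nra.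
rewrite normrM normfV normrX.
apply: (@le_trans _ _ (`|s| ^+ 2 / `|A * s|)).
  by rewrite ler_wpM2l ?exprn_ge0 // lef_pV2 ?posrE // (lt_le_trans As_gt0).
by rewrite normrM expr2 invfM mulrACA mulfV ?normr_eq0 // mulr1.
Qed.
End FfunForm.

Lemma sgr_sign {R : realDomainType} [k] [y : R] :
  1 <= (-1) ^+ k * y -> Num.sg y = (-1) ^+ k.
Proof.
by rewrite -signr_odd; case: odd; rewrite ?expr0 ?expr1 ?mul1r ?mulN1r => y_ge;
  [rewrite ltr0_sg | rewrite gtr0_sg]; lra.
Qed.

Lemma interval_mul_gt0 {R : realDomainType} (E : set R) u v :
  is_interval E -> E u -> E v -> ~ E 0 -> 0 < u * v.
Proof.
move=> iE Eu Ev E0; rewrite ltNge; apply/negP => uv_le0; apply: E0.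
have [le_uv|le_vu] := leP u v.
  by apply: (iE u v) => //; nra.
by apply: (iE v u) => //; nra.
Qed.

Lemma cvgr_dominated {T} {F : set_system T} {FF : Filter F} {R : realFieldType}
    (f h : T -> R) (l : R) :
  (\forall t \near F, `|f t - l| <= h t) -> h @ F --> 0 -> f @ F --> l.
Proof.
move=> f_h h0; apply/cvgrPdist_lt => e e_gt0.
near=> t; rewrite distrC (le_lt_trans (near f_h t _)) //.
apply: le_lt_trans (ler_norm _) _; near: t.
exact: cvgr0_norm_lt.
Unshelve. all: by end_near. Qed.

Section Trig.
Context {R : realType}.
Implicit Types (x t : R) (m : nat).

Lemma cos_natmulpi m : cos (m%:R * pi) = (-1) ^+ m :> R.
Proof.
by rewrite mulr_natl -[_ *+ m]add0r (alternatingn (@cosDpi R)) cos0 mulr1.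
Qed.

Lemma sin_natmulpi m : sin (m%:R * pi) = 0 :> R.
Proof.
by rewrite mulr_natl -[_ *+ m]add0r (alternatingn (@sinDpi R)) sin0 mulr0.
Qed.

Lemma cos_mulpiBn x m : cos ((x - m%:R) * pi) = (-1) ^+ m * cos (x * pi).
Proof. by rewrite mulrBl cosB cos_natmulpi sin_natmulpi mulr0 addr0 mulrC. Qed.

Lemma cos_mulpi_lt1 t : 0 < `|t| < 1 -> cos (t * pi) < 1.
Proof.
move=> /andP[t_gt0 t_lt1].
have -> : cos (t * pi) = cos (`|t| * pi).
  by case: (ger0P t) => _; rewrite ?mulNr ?cosN.
have pi_gt0 := pi_gt0 R.
rewrite -cos0 ltr_cos ?in_itv /= ?mulr_gt0 ?lexx ?mulr_ge0 ?ltW //.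
by rewrite gtr_pMl.
Qed.
End Trig.

Section Gfun.
Context {R : realType} {alpha : R}.

Lemma gfun_continuous x : 0 < x -> {for x, continuous (gfun alpha)}.
Proof.
move=> x_gt0; have mulpi_cont := @mulrr_continuous _ pi x.
have cos_cont := continuous_comp mulpi_cont (@continuous_cos R _).
have sin_cont := continuous_comp mulpi_cont (@continuous_sin R _).
have inv_cont : {for x, continuous (fun y : R => (4 * y)^-1)}.
  by apply: continuousV; [rewrite mulf_neq0 ?gt_eqF | exact: mulrl_continuous].
exact: continuousD cos_cont
  (continuousM (continuousM (cvg_cst alpha) inv_cont) sin_cont).
Qed.

Lemma gfun_nat m : gfun alpha m%:R = (-1) ^+ m.
Proof. by rewrite /gfun cos_natmulpi sin_natmulpi mulr0 addr0. Qed.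

Context {n : nat}.
Hypothesis n_gt0 : (0 < n)%N.

Lemma Iset_gfun [x] : Iset alpha n x -> 0 < x /\ 1 <= `|gfun alpha x|.
Proof. exact: connected_component_sub. Qed.

Lemma Iset_interval : is_interval (Iset alpha n).
Proof. exact/connected_intervalP/component_connected. Qed.

Lemma Iset_nat : Iset alpha n n%:R.
Proof.
exists [set n%:R]; split=> //; last exact: connected1.
by move=> _ ->; split; rewrite ?ltr0n // gfun_nat normrX normrN1 expr1n.
Qed.

Lemma gfun_Iset_interval : is_interval (gfun alpha @` Iset alpha n).
Proof.
apply/connected_intervalP/connected_continuous_connected.
  exact: component_connected.
apply: continuous_in_subspaceT => x /[!inE] /Iset_gfun[x_gt0 _].
exact: gfun_continuous.
Qed.

Lemma Iset_sign [x] : Iset alpha n x -> 1 <= (-1) ^+ n * gfun alpha x.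
Proof.
move=> Ix; have [_ gx_ge1] := Iset_gfun Ix.
have : 0 < (-1) ^+ n * gfun alpha x.
  apply: interval_mul_gt0 gfun_Iset_interval _ _ _.
  - by rewrite -gfun_nat; exists n%:R => //; exact: Iset_nat.
  - by exists x.
  by move=> [z /Iset_gfun[_]] /[swap] ->; rewrite normr0 ler10.
by move/gtr0_norm <-; rewrite normrM normrX normrN1 expr1n mul1r.
Qed.

Lemma Iset_dist_lt1 [x] : Iset alpha n x -> `|x - n%:R| < 1.
Proof.
move=> Ix; rewrite ltNge; apply/negP => dist_ge1.
have [m Im sign_m] : exists2 m, Iset alpha n m%:R & (-1) ^+ m = - (-1) ^+ n :> R.
  have [n_le_x|x_lt_n] := leP n%:R x.
    exists n.+1; last by rewrite exprS mulN1r.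
    rewrite ger0_norm ?subr_ge0 // in dist_ge1.
    by apply: (Iset_interval _ _ Iset_nat Ix); rewrite -natr1 lerDl ler01 /=; lra.
  exists n.-1; last by rewrite -[in RHS](prednK n_gt0) exprS mulN1r opprK.
  rewrite ltr0_norm ?subr_lt0 // in dist_ge1.
  apply: (Iset_interval _ _ Ix Iset_nat).
  have nE : n%:R = n.-1%:R + 1 :> R by rewrite natr1 prednK.
  by rewrite nE in dist_ge1 *; lra.
have := Iset_sign Im; rewrite gfun_nat sign_m mulrN -expr2 sqrr_sign; lra.
Qed.

End Gfun.

Section Ffun.
Context {R : realType}.
Variables (alpha : R) (n : nat).
Hypotheses (alpha_neq0 : alpha != 0) (n_gt0 : (0 < n)%N).

Lemma ffun_Iset [x] : Iset alpha n x ->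
  ffun alpha x = ffun_form (cos (x * pi)) (sin (x * pi)) (alpha / (4 * x))
                   ((-1) ^+ n * Num.sqrt (gfun alpha x ^+ 2 - 1)).
Proof.
by move=> Ix; rewrite /ffun /ffun_form (sgr_sign (Iset_sign n_gt0 Ix)).
Qed.

Lemma ffun_Iset_range [x] : Iset alpha n x -> x != n%:R ->
  ((-1 < ffun alpha x < 1) \/ ffun alpha x = (-1) ^+ n) /\
  (ffun alpha x = (-1) ^+ n <-> `|gfun alpha x| = 1).
Proof.
move=> Ix x_neq_n; have [_ gx_ge1] := Iset_gfun Ix.
have cos_neq : cos (x * pi) != (-1) ^+ n.
  apply/eqP => cos_eq; have := cos_mulpi_lt1 (x - n%:R).
  rewrite normr_gt0 subr_eq0 x_neq_n (Iset_dist_lt1 n_gt0 Ix) cos_mulpiBn cos_eq.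
  by rewrite -expr2 sqrr_sign ltxx => /(_ isT).
rewrite ffun_Iset //; apply: ffun_form_range (Iset_sign n_gt0 Ix) cos_neq => //.
  exact: cos2Dsin2.
by rewrite sqr_sqrtr // subr_ge0 -real_normK ?num_real // exprn_ege1.
Qed.

Lemma ffun_Iset_dist [x] : Iset alpha n x ->
  `|ffun alpha x - (-1) ^+ n.+1| <=
    `|cos (x * pi) - (-1) ^+ n| + `|sin (x * pi) * (4 * x / alpha)|.
Proof.
move=> Ix; have [x_gt0 _] := Iset_gfun Ix; have g_ge1 := Iset_sign n_gt0 Ix.
rewrite ffun_Iset // /ffun_form [(-1) ^+ n.+1]exprS mulN1r.
set c := cos _; set s := sin _; set A := alpha / _; set r := Num.sqrt _.
set σ := (-1) ^+ n; set q := s ^+ 2 / _.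
have -> : - c + q - - σ = q - (c - σ) by ring.
apply: le_trans (ler_normB _ _) _; rewrite addrC lerD2l.
have -> : s * (4 * x / alpha) = s / A by rewrite /A invf_div.
rewrite [in X in _ <= X]normrM normfV; apply: norm_sqr_div_le.
  by rewrite mulf_neq0 // invr_neq0 // mulf_neq0 // gt_eqF.
have sAs_ge0 : 0 <= σ * (A * s).
  have : σ * c <= 1.
    rewrite (le_trans (ler_norm _)) //.
    by rewrite normrM normrX normrN1 expr1n mul1r cos_max.
  by move: g_ge1; rewrite /gfun -/c -/s -/A -/σ mulrDr; lra.
have -> : A * s * (σ * r) = σ * (A * s) * r by ring.
by rewrite mulr_ge0 // sqrtr_ge0.
Qed.

Lemma ffun_dist_bound_cvg0 :
  `|cos (y * pi) - (-1) ^+ n| + `|sin (y * pi) * (4 * y / alpha)|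
    @[y --> (n%:R : R)] --> 0.
Proof.
set bound := fun y : R => _.
have -> : 0 = bound n%:R.
  by rewrite /bound cos_natmulpi sin_natmulpi subrr mul0r !normr0 addr0.
have mulpi_cont := @mulrr_continuous R pi n%:R.
have cos_cont := continuous_comp mulpi_cont (@continuous_cos R _).
have sin_cont := continuous_comp mulpi_cont (@continuous_sin R _).
have lin_cont : {for n%:R, continuous (fun y : R => 4 * y / alpha)}.
  by have := continuousM (@mulrl_continuous _ 4 n%:R) (cvg_cst alpha^-1); apply.
have norm_cont := @norm_continuous _ R^o.
exact: continuousD
  (continuous_comp (continuousB cos_cont (cvg_cst _)) (norm_cont _))
  (continuous_comp (continuousM sin_cont lin_cont) (norm_cont _)).
Qed.

End Ffun.

Theorem proposition3p2 (R : realType) (alpha : R) (n : nat) :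
  alpha != 0 -> (0 < n)%N ->
  (forall x : R, Iset alpha n x -> x != n%:R ->
     ((-1 < ffun alpha x < 1) \/ ffun alpha x = (-1) ^+ n) /\
     (ffun alpha x = (-1) ^+ n <-> `|gfun alpha x| = 1)) /\
  (ffun alpha @ within [set x | Iset alpha n x /\ x != n%:R] (nbhs (n%:R : R))
     --> ((-1) ^+ n.+1 : R)).
Proof.
move=> alpha_neq0 n_gt0; split=> [x|]; first exact: ffun_Iset_range.
apply: cvgr_dominated.
  by rewrite near_withinE; apply: nearW => x [Ix _]; exact: ffun_Iset_dist.
exact: cvg_within_filter (ffun_dist_bound_cvg0 alpha n).
Qed.
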